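(* Let $n\ge 2$ and $q=p_n$. Then for $X=F_n(q)$ the matrix $X^TX$ is invertible and the log-prime estimator satisfies $\ln\hat q=(X^TX)^{-1}X^T\ln z_n=\ln p_n$.
   Context: $z_n=(1,\dots,n)^T$; $p_n$ is the vector of all primes $\le n$ in increasing order; logarithms of vectors are entry-wise. For $1\le i\le n$, $e_{\bar i|n}\in\mathbb{R}^n$ has $k$-th entry $1$ if $i\mid k$, else $0$. For $2\le i\le n$, $f_{i|n}=\sum_{t=1}^{\lfloor \log_i n\rfloor} e_{\overline{i^t}|n}$. For $q=(q_1,\dots,q_m)^T$ with distinct entries in $\{2,\dots,n\}$, $F_n(q)=[f_{q_1|n}\ \cdots\ f_{q_m|n}]\in\mathbb{R}^{n\times m}$. *)

From Stdlib Require Import Reals.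
From mathcomp Require Import all_boot.
Unset Printing Implicit Defensive.

(* Real vectors/matrices indexed by ordinals: row k : 'I_n stands for index k+1. *)
Definition rsum {n : nat} (F : 'I_n -> R) : R := \big[Rplus/R0]_(i < n) F i.

Definition mmul {m p r : nat} (A : 'I_m -> 'I_p -> R) (B : 'I_p -> 'I_r -> R)
  : 'I_m -> 'I_r -> R := fun i j => rsum (fun k => Rmult (A i k) (B k j)).

Definition mvec {m p : nat} (A : 'I_m -> 'I_p -> R) (v : 'I_p -> R) : 'I_m -> R :=
  fun i => rsum (fun k => Rmult (A i k) (v k)).

Definition trm {m p : nat} (A : 'I_m -> 'I_p -> R) : 'I_p -> 'I_m -> R :=
  fun j i => A i j.

Definition idm {m : nat} : 'I_m -> 'I_m -> R :=
  fun i j => if i == j then R1 else R0.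

Definition is_inverse {m : nat} (B A : 'I_m -> 'I_m -> R) : Prop :=
  forall i j, mmul B A i j = idm i j /\ mmul A B i j = idm i j.

(* z_n = (1,...,n)^T, entrywise log *)
Definition ln_z (n : nat) : 'I_n -> R := fun k => ln (INR k.+1).

Definition primes_upto (n : nat) : seq nat := [seq p <- iota 1 n | prime p].

Definition ln_vec (q : seq nat) : 'I_(size q) -> R := fun j => ln (INR (nth 0 q j)).

Definition ebar (i n : nat) : 'I_n -> R := fun k => if i %| k.+1 then R1 else R0.

(* f_{i|n} = sum_{t=1}^{floor(log_i n)} e_{\bar{i^t}|n};
   trunc_log i n = largest t with i^t <= n = floor(log_i n) for i >= 2, n >= 1. *)
Definition fvec (i n : nat) : 'I_n -> R :=
  fun k => \big[Rplus/R0]_(1 <= t < (trunc_log i n).+1) ebar (i ^ t) n k.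

Definition Fmat (n : nat) (q : seq nat) : 'I_n -> 'I_(size q) -> R :=
  fun k j => fvec (nth 0 q j) n k.

(* For X = F_n(p_n) the entry X_{k,j} is the p_j-adic valuation of k, so row
   p_j of X is the j-th unit vector: X has full column rank and X^T X is
   positive definite, hence invertible.  Unique factorisation reads
   ln z_n = X ln p_n, whence (X^T X)^{-1} X^T ln z_n = ln p_n. *)

From Stdlib Require Import Reals.
From mathcomp Require Import all_boot all_algebra Rstruct.
Import GRing.Theory Num.Theory.

Local Open Scope ring_scope.

Lemma ln_natM (a b : nat) : (0 < a)%N -> (0 < b)%N ->
  ln (a * b)%N%:R = ln a%:R + ln b%:R.
Proof.
by move=> a_gt0 b_gt0; rewrite natrM; apply: ln_mult; rewrite -INRE;
  apply/lt_0_INR/ltP.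
Qed.

Lemma ln_natX (p e : nat) : (0 < p)%N -> ln (p ^ e)%N%:R = e%:R * ln p%:R.
Proof.
move=> p_gt0; elim: e => [|e IHe]; first by rewrite expn0 mul0r; exact: ln_1.
by rewrite expnS ln_natM ?expn_gt0 ?p_gt0 // IHe -addn1 natrD mulrDl mul1r addrC.
Qed.

Lemma ln_nat_prod (I : Type) (r : seq I) (P : pred I) (F : I -> nat) :
  (forall i, P i -> 0 < F i)%N ->
  ln (\prod_(i <- r | P i) F i)%N%:R = \sum_(i <- r | P i) ln (F i)%:R.
Proof.
move=> F_gt0; pose ln_pos k x := (0 < k)%N /\ ln k%:R = x.
suff [] : ln_pos (\prod_(i <- r | P i) F i)%N (\sum_(i <- r | P i) ln (F i)%:R)
  by [].
apply: big_rec2 => [|i k x Pi [k_gt0 <-]]; first by split => //; exact: ln_1.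
by split; rewrite ?muln_gt0 ?F_gt0 ?ln_natM ?F_gt0.
Qed.

Lemma ln_nat_logn (m : nat) : (0 < m)%N ->
  ln m%:R = \sum_(0 <= p < m.+1) (logn p m)%:R * ln p%:R.
Proof.
move=> m_gt0; rewrite -{1}(partnT m_gt0) /partn ln_nat_prod => [|p _].
  apply: eq_bigr => p _; case: (posnP p) => [->|p_gt0]; last exact: ln_natX.
  by rewrite (_ : logn 0 m = 0%N) // expn0 mul0r; exact: ln_1.
by rewrite expn_gt0; case: (posnP p) => [->|//]; rewrite (_ : logn 0 m = 0%N).
Qed.

Lemma mem_primes_upto (n p : nat) : (p \in primes_upto n) = prime p && (p <= n)%N.
Proof.
rewrite mem_filter mem_iota add1n ltnS.
by case: (boolP (prime p)) => //= /prime_gt0 ->.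
Qed.

Lemma uniq_primes_upto (n : nat) : uniq (primes_upto n).
Proof. exact/filter_uniq/iota_uniq. Qed.

Lemma nth_primes_upto (n : nat) (j : 'I_(size (primes_upto n))) :
  prime (nth 0%N (primes_upto n) j) /\ (nth 0%N (primes_upto n) j <= n)%N.
Proof. by apply/andP; rewrite -mem_primes_upto mem_nth. Qed.

Lemma pred_nth_primes_upto_lt (n : nat) (j : 'I_(size (primes_upto n))) :
  ((nth 0%N (primes_upto n) j).-1 < n)%N.
Proof. by case: (nth_primes_upto _ j) => /prime_gt0 p_gt0; rewrite prednK. Qed.

Definition prime_row (n : nat) (j : 'I_(size (primes_upto n))) : 'I_n :=
  Ordinal (pred_nth_primes_upto_lt _ j).

Lemma ln_nat_primes_upto (n m : nat) : (0 < m)%N -> (m <= n)%N ->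
  ln m%:R = \sum_(p <- primes_upto n) (logn p m)%:R * ln p%:R.
Proof.
move=> m_gt0 le_mn; pose g p : R := (logn p m)%:R * ln p%:R.
have g_nprime p : ~~ prime p -> g p = 0.
  by move=> np; rewrite /g /logn (negbTE np) mul0r.
rewrite ln_nat_logn // [in RHS]big_filter.
transitivity (\sum_(0 <= p < n.+1) g p).
  rewrite [RHS](big_cat_nat _ (n := m.+1)) //= [X in _ + X]big1_seq ?addr0 // => p.
  rewrite mem_index_iota => /andP[_ /andP[lt_mp _]].
  rewrite /g (_ : logn p m = 0%N) ?mul0r //; apply/eqP; rewrite -leqn0 leqNgt.
  by rewrite logn_gt0 mem_primes m_gt0 andbC /= gtnNdvd.
rewrite big_ltn // g_nprime // add0r [RHS]big_mkcond /index_iota subSS subn0.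
by apply: eq_bigr => p _; case: ifP => // /negbT /g_nprime.
Qed.

Lemma sum_nat_leq_indicator (T L : nat) :
  \big[Rplus/R0]_(1 <= t < T.+1) (if (t <= L)%N then R1 else R0) = (minn T L)%:R.
Proof.
elim: T => [|T IHT]; first by rewrite big_geq // min0n.
rewrite big_nat_recr //= IHT; case: (leqP T.+1 L) => [lt_TL|le_LT].
  by rewrite (minn_idPl (ltnW lt_TL)) -addn1 natrD.
by rewrite (minn_idPr (le_LT : L <= T)%N); exact: Rplus_0_r.
Qed.

Lemma fvec_prime (p n : nat) (k : 'I_n) : prime p -> fvec p n k = (logn p k.+1)%:R.
Proof.
move=> p_pr; rewrite /fvec /ebar.
under eq_big_nat => t /andP[t_gt0 _] do rewrite pfactor_dvdn //.
rewrite sum_nat_leq_indicator; congr _%:R; apply/minn_idPr.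
apply: trunc_log_max; first exact: prime_gt1.
exact: leq_trans (dvdn_leq (ltn0Sn k) (pfactor_dvdnn p k.+1)) (ltn_ord k).
Qed.

Lemma row_full_rowsub (F : fieldType) (m n : nat) (s : 'I_n -> 'I_m)
    (A : 'M[F]_(m, n)) :
  rowsub s A = 1%:M -> row_full A.
Proof.
by move=> sA; apply/row_fullP; exists (rowsub s 1%:M); rewrite mul_rowsub_mx mul1mx.
Qed.

Lemma mul_rV_tr_eq0 (F : realFieldType) (n : nat) (w : 'rV[F]_n) :
  w *m w^T = 0 -> w = 0.
Proof.
move=> /matrixP/(_ 0 0); rewrite !mxE => sq_sum0.
have sq_ge0 i : true -> 0 <= w 0 i * w^T i 0 by rewrite mxE -expr2 sqr_ge0.
apply/rowP => i; have /eqP := psumr_eq0P sq_ge0 sq_sum0 (i := i) isT.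
by rewrite !mxE mulf_eq0 orbb => /eqP.
Qed.

Lemma tr_mul_unitmx (F : realFieldType) (m n : nat) (A : 'M[F]_(m, n)) :
  row_full A -> A^T *m A \in unitmx.
Proof.
move=> A_full; rewrite -row_free_unit; apply: inj_row_free => u uAA0.
have uAT0 : u *m A^T = 0.
  by apply: mul_rV_tr_eq0; rewrite trmx_mul trmxK mulmxA -(mulmxA u) uAA0 mul0mx.
have AT_free : row_free A^T by rewrite /row_free mxrank_tr.
by apply/eqP; rewrite -(mulmx_free_eq0 _ AT_free) uAT0.
Qed.

Definition mx_of {m p : nat} (A : 'I_m -> 'I_p -> R) : 'M[R]_(m, p) :=
  \matrix_(i, j) A i j.

Definition col_of {m : nat} (v : 'I_m -> R) : 'cV[R]_m := \col_i v i.

Lemma mx_ofK {m p : nat} (A : 'M[R]_(m, p)) : mx_of (fun i j => A i j) = A.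
Proof. by apply/matrixP => i j; rewrite mxE. Qed.

Lemma mx_of_mmul {m p r : nat} (A : 'I_m -> 'I_p -> R) (B : 'I_p -> 'I_r -> R) :
  mx_of (mmul A B) = mx_of A *m mx_of B.
Proof. by apply/matrixP => i j; rewrite !mxE; apply: eq_bigr => k _; rewrite !mxE. Qed.

Lemma mx_of_trm {m p : nat} (A : 'I_m -> 'I_p -> R) : mx_of (trm A) = (mx_of A)^T.
Proof. by apply/matrixP => i j; rewrite !mxE. Qed.

Lemma mx_of_idm {m : nat} : mx_of (@idm m) = 1%:M.
Proof. by apply/matrixP => i j; rewrite !mxE /idm; case: (i == j). Qed.

Lemma col_of_mvec {m p : nat} (A : 'I_m -> 'I_p -> R) (v : 'I_p -> R) :
  col_of (mvec A v) = mx_of A *m col_of v.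
Proof. by apply/colP => i; rewrite !mxE; apply: eq_bigr => k _; rewrite !mxE. Qed.

Lemma is_inverseP {m : nat} (B A : 'I_m -> 'I_m -> R) :
  is_inverse B A <-> mx_of B *m mx_of A = 1%:M /\ mx_of A *m mx_of B = 1%:M.
Proof.
rewrite -!mx_of_mmul -mx_of_idm; split=> [inv_BA | [BA AB] i j].
  by split; apply/matrixP => i j; rewrite !mxE; case: (inv_BA i j).
by move/matrixP/(_ i j): BA; move/matrixP/(_ i j): AB; rewrite !mxE.
Qed.

Lemma Fmat_primes_upto (n : nat) (k : 'I_n) (j : 'I_(size (primes_upto n))) :
  Fmat n (primes_upto n) k j = (logn (nth 0%N (primes_upto n) j) k.+1)%:R.
Proof. by rewrite /Fmat fvec_prime //; case: (nth_primes_upto _ j). Qed.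

Lemma ln_z_Fmat (n : nat) :
  col_of (ln_z n) = mx_of (Fmat n (primes_upto n)) *m col_of (ln_vec (primes_upto n)).
Proof.
apply/colP => k; rewrite !mxE /ln_z INRE (ln_nat_primes_upto n) //.
rewrite (big_nth 0%N) big_mkord; apply: eq_bigr => j _.
by rewrite !mxE Fmat_primes_upto /ln_vec INRE.
Qed.

Lemma rowsub_Fmat_primes_upto (n : nat) :
  rowsub (@prime_row n) (mx_of (Fmat n (primes_upto n))) = 1%:M.
Proof.
apply/matrixP => j j'; rewrite !mxE Fmat_primes_upto /=.
have [p_pr _] := nth_primes_upto _ j.
rewrite prednK ?prime_gt0 // logn_prime //.
by rewrite (nth_uniq _ (ltn_ord j') (ltn_ord j) (uniq_primes_upto n)) eq_sym.
Qed.

Theorem theorem3p2 (n : nat) (hn : (2 <= n)%N) :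
  let q := primes_upto n in
  let X := Fmat n q in
  let G := mmul (trm X) X in
  (exists B, is_inverse B G) /\
  (forall B, is_inverse B G ->
     forall j, mvec B (mvec (trm X) (ln_z n)) j = ln_vec q j).
Proof.
move=> q X G.
have G_unit : mx_of G \in unitmx.
  rewrite mx_of_mmul mx_of_trm; apply: tr_mul_unitmx.
  exact: row_full_rowsub (rowsub_Fmat_primes_upto n).
split.
  exists (fun i j => invmx (mx_of G) i j); apply/is_inverseP.
  by rewrite mx_ofK mulVmx ?mulmxV.
move=> B /is_inverseP[BG _] j.
transitivity (col_of (mvec B (mvec (trm X) (ln_z n))) j 0); first by rewrite mxE.
rewrite !col_of_mvec ln_z_Fmat mx_of_trm !mulmxA -(mulmxA (mx_of B)).
by rewrite -mx_of_trm -mx_of_mmul BG mul1mx mxE.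
Qed.
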